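(* Let $A$ be a cubic graph with $v(A)\equiv 0\pmod 6$, let $a\in V(A)$ with $N(a,A)=\{a_1,a_2,a_3\}$, and suppose $A$ has no $\Lambda$-factor containing the edge $e=aa_1$. Let $G=Y(A,a)$. Then $v(G)\equiv 0\pmod 6$ and $G$ has no $\Lambda$-factor.
   Context: Graphs are finite, undirected, without loops or multiple edges; $v(G)=|V(G)|$; $N(x,G)$ is the set of neighbours of $x$. $Y(A,a)$ is defined as follows: take three disjoint copies $A^1,A^2,A^3$ of $A$, where $a^i,a^i_1,a^i_2,a^i_3$ denote the copies in $A^i$ of $a,a_1,a_2,a_3$; form $(A^1-a^1)\cup(A^2-a^2)\cup(A^3-a^3)$ and add three new vertices $z_1,z_2,z_3$ and the nine new edges $z_ja^i_j$, $i,j\in\{1,2,3\}$. A $\Lambda$-factor of a graph is a spanning subgraph each of whose components is a path on 3 vertices; it contains an edge $e$ if $e$ is an edge of it. *)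

From mathcomp Require Import all_boot.
Set Implicit Arguments. Unset Strict Implicit. Unset Printing Implicit Defensive.
Set Warnings "-notation-overridden".

Definition simple_graph (T : finType) (E : rel T) : Prop :=
  symmetric E /\ irreflexive E.

Definition nbhd (T : finType) (E : rel T) (x : T) : {set T} := [set y | E x y].

Definition cubic (T : finType) (E : rel T) : Prop :=
  forall x : T, #|nbhd E x| = 3.

(* Lambda-factor: a spanning subgraph (edge relation F ⊆ E, symmetric) each
   of whose connected components is a path u - v - w on 3 vertices. *)
Definition Lambda_factor (T : finType) (E F : rel T) : Prop :=
  subrel F E /\ symmetric F /\
  forall x : T, exists u v w : T,
    uniq [:: u; v; w] /\
    (forall y, connect F x y <-> y \in [:: u; v; w]) /\
    (forall p q, p \in [:: u; v; w] ->
       (F p q <-> (p, q) \in [:: (u, v); (v, u); (v, w); (w, v)])).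

Definition has_Lambda_factor (T : finType) (E : rel T) : Prop :=
  exists F : rel T, Lambda_factor E F.

Definition has_Lambda_factor_containing (T : finType) (E : rel T) (x y : T) : Prop :=
  exists F : rel T, Lambda_factor E F /\ F x y.

(* Vertices: inl (i, x) is the copy x^i in A^i - a^i
   (i : 'I_3, x : T with x != a); inr j is the new vertex z_j. *)
Arguments nbhd {T} E x.
Definition YV (T : finType) (a : T) : finType :=
  (('I_3 * {x : T | x != a}) + 'I_3)%type.

Arguments YV : clear implicits.

Definition Yrel (T : finType) (E : rel T) (a : T) (nb : 'I_3 -> T) : rel (YV T a) :=
  fun p q =>
    match p, q with
    | inl (i, x), inl (j, y) => (i == j) && E (val x) (val y)
    | inl (i, x), inr j => val x == nb j
    | inr j, inl (i, x) => val x == nb j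
    | inr _, inr _ => false
    end.
Arguments Yrel {T} E a nb _ _.

(* Let F be a Lambda-factor of G = Y(A,a) and call a vertex of the copy A^i - a^i
   attached when its F-component contains one of z_1, z_2, z_3.  Unattached
   components stay inside one copy, so the number of attached vertices of each
   copy is v(A) - 1 = 2 (mod 3); the components of z_1, z_2, z_3 have only six
   other vertices, hence every copy has exactly two.  In the copy i holding the F-neighbour of z_1,
   collapsing z_1, z_2, z_3 onto a turns F into a Lambda-factor of A in which a and
   the two attached vertices form a path; it contains the edge a a_1. *)

From mathcomp Require Import all_boot zify.
Set Warnings "-notation-overridden".
Set Implicit Arguments. Unset Strict Implicit. Unset Printing Implicit Defensive.

Section LambdaFactorTheory.
Variables (T : finType) (E F : rel T).
Hypothesis LF : Lambda_factor E F.

Lemma Lambda_factor_sub : subrel F E. Proof. by case: LF. Qed.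

Lemma Lambda_factor_sym : symmetric F. Proof. by case: LF => _ []. Qed.

Lemma Lambda_factor_connect_sym : connect_sym F.
Proof. exact: sym_connect_sym Lambda_factor_sym. Qed.

Lemma Lambda_factor_irr : irreflexive F.
Proof.
move=> x; apply/negP; case: LF => _ [_ /(_ x) [u [v [w [U [C Hp]]]]]].
move/(Hp x x (proj1 (C x) (connect0 F x))); rewrite !inE !xpair_eqE.
by case/or4P => /andP [/eqP e1 /eqP e2]; subst; move: U; rewrite /= !inE eqxx /= ?andbF.
Qed.

Lemma Lambda_factor_path3 x : exists u v w, [/\ uniq [:: u; v; w],
  forall y, connect F x y <-> y \in [:: u; v; w], F u v, F v w & ~~ F u w].
Proof.
case: LF => _ [_ /(_ x) [u [v [w [U [C Hp]]]]]]; exists u, v, w.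
have uC : u \in [:: u; v; w] by rewrite mem_head.
have vC : v \in [:: u; v; w] by rewrite !inE eqxx orbT.
split=> //; first by apply/(Hp u v uC); rewrite mem_head.
  by apply/(Hp v w vC); rewrite !inE eqxx !orbT.
move: U; rewrite /= !inE negb_or andbT => /andP [/andP [uv uw] vw].
apply/negP => /(Hp u w uC); rewrite !inE !xpair_eqE (eq_sym w u) (eq_sym w v).
by rewrite (negbTE uv) (negbTE uw) (negbTE vw) !andbF.
Qed.

Lemma card_Lambda_factor_component x : #|[set y | connect F x y]| = 3.
Proof.
have [u [v [w [U C _ _ _]]]] := Lambda_factor_path3 x.
have -> : [set y | connect F x y] = [set y in [:: u; v; w]].
  by apply/setP => y; rewrite inE [in RHS]inE; apply/idP/idP => /C.
by rewrite cardsE; apply/card_uniqP.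
Qed.

Lemma Lambda_factor_centre x : exists c, [/\ connect F x c,
  forall p q, connect F x p -> F p q -> (p == c) (+) (q == c) &
  forall p, connect F x p -> p != c -> F p c].
Proof.
have [u [v [w [U C Fuv Fvw nFuw]]]] := Lambda_factor_path3 x.
move: U; rewrite /= !inE negb_or andbT => /andP [/andP [uv uw] vw].
exists v; split=> [|p q /C pC Fpq|p /C]; first by apply/C; rewrite !inE eqxx orbT.
  have /C qC : connect F x q by apply: connect_trans (connect1 Fpq); apply/C.
  move: pC qC Fpq; rewrite !inE => /or3P [] /eqP -> /or3P [] /eqP ->;
    rewrite ?Lambda_factor_irr ?eqxx ?(eq_sym w v) ?(negbTE uv) ?(negbTE vw) //.
    by rewrite (negbTE nFuw).
  by rewrite Lambda_factor_sym (negbTE nFuw).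
rewrite !inE => /or3P [] /eqP -> //; first by rewrite eqxx.
by rewrite Lambda_factor_sym.
Qed.

Lemma Lambda_factor_connect2 x y :
  connect F x y -> x != y -> F x y \/ exists2 t, F x t & F t y.
Proof.
move=> xy xny; have [c [_ _ Fc]] := Lambda_factor_centre x.
have [xc|xc] := eqVneq x c.
  by left; rewrite Lambda_factor_sym xc; apply: Fc; rewrite // -xc eq_sym.
have Fxc := Fc x (connect0 F x) xc.
have [<-|yc] := eqVneq c y; first by left.
by right; exists c => //; rewrite Lambda_factor_sym; apply: Fc; rewrite // eq_sym.
Qed.

Lemma Lambda_factor_walk3 x y z t : F x y -> F y z -> F z t -> x = z \/ y = t.
Proof.
move=> Fxy Fyz Fzt; have [c [_ Hc _]] := Lambda_factor_centre y.
have yx : connect F y x by apply: connect1; rewrite Lambda_factor_sym.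
have yz : connect F y z := connect1 Fyz.
have := Hc _ _ yx Fxy; have := Hc _ _ (connect0 F y) Fyz; have := Hc _ _ yz Fzt.
by case: eqP => [->|_]; case: eqP => [->|_]; case: eqP => [->|_];
   case: eqP => [->|_]; auto.
Qed.

Lemma Lambda_factor_neighbour x : exists y, F x y.
Proof.
have [u [v [w [_ C Fuv Fvw _]]]] := Lambda_factor_path3 x.
have /C := connect0 F x; rewrite !inE => /or3P [] /eqP ->; eauto.
by exists v; rewrite Lambda_factor_sym.
Qed.

End LambdaFactorTheory.

Lemma Lambda_factor_of_paths (T : finType) (E F : rel T) :
  subrel F E -> symmetric F -> irreflexive F ->
  (forall x, exists u v w, [/\ uniq [:: u; v; w], x \in [:: u; v; w],
      F u v, F v w & ~~ F u w] /\
    {in [:: u; v; w], forall p q, F p q -> q \in [:: u; v; w]}) ->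
  Lambda_factor E F.
Proof.
move=> sub sym irr H; do 2!split=> //; move=> x.
have [u [v [w [[U xC Fuv Fvw nFuw] clC]]]] := H x.
have clF : closed F [:: u; v; w].
  move=> p q Fpq; apply/idP/idP => [/clC|]; first exact.
  by move/clC; apply; rewrite sym.
have conn p : p \in [:: u; v; w] -> connect F v p.
  rewrite !inE => /or3P [] /eqP ->; last exact: connect1.
    by apply: connect1; rewrite sym.
  exact: connect0.
exists u, v, w; split=> //; split=> [y|p q pC].
  split=> [xy|yC]; first by rewrite -(closed_connect clF xy).
  apply: connect_trans (conn _ yC); rewrite (sym_connect_sym sym); exact: conn.
move: U; rewrite /= !inE negb_or andbT => /andP [/andP [uv uw] vw].
split=> [Fpq|]; last first.
  by rewrite ?inE !xpair_eqE => /or4P [] /andP [/eqP -> /eqP ->]; rewrite // sym.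
have qC := clC p pC q Fpq.
move: pC qC Fpq; rewrite ?inE !xpair_eqE => /or3P [] /eqP -> /or3P [] /eqP ->;
  rewrite ?irr ?eqxx ?(eq_sym w v) ?(eq_sym v u) ?(eq_sym w u)
    ?(negbTE uv) ?(negbTE vw) ?(negbTE uw) ?orbT //.
- by rewrite (negbTE nFuw).
- by rewrite sym (negbTE nFuw).
Qed.

Lemma triangle_free_path3 (T : eqType) (F : rel T) x y z :
  symmetric F -> ~~ [&& F x y, F y z & F x z] ->
  F x y || F x z -> F y x || F y z -> F z x || F z y ->
  exists u v w, [/\ perm_eq [:: u; v; w] [:: x; y; z], F u v, F v w & ~~ F u w].
Proof.
move=> sym; rewrite (sym y x) (sym z x) (sym z y).
case Fxy : (F x y); case Fyz : (F y z); case Fxz : (F x z) => //= _ _ _ _.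
- by exists x, y, z; rewrite Fxy Fyz Fxz perm_refl.
- exists y, x, z; rewrite sym Fxy Fxz Fyz; split=> //.
  by apply/permP => p /=; lia.
- exists x, z, y; rewrite Fxz sym Fyz Fxy; split=> //.
  by apply/permP => p /=; lia.
Qed.

Section YConstruction.
Variables (T : finType) (E : rel T) (a : T) (nb : 'I_3 -> T).

Local Notation Sub := {x : T | x != a}.
Local Notation V := (YV T a).

Definition Ycopy (i : 'I_3) (x : Sub) : V := inl (i, x).

Lemma Ycopy_inj i : injective (Ycopy i). Proof. by move=> x y [->]. Qed.

Lemma card_Sub : #|{: Sub}| = #|T|.-1.
Proof. by rewrite card_sig; exact: cardC1. Qed.

Lemma card_YV : #|{: V}| = 3 * #|T|.
Proof.
have : 0 < #|T| by apply/card_gt0P; exists a.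
by rewrite card_sum card_prod card_ord card_Sub; lia.
Qed.

Section YFactor.
Variable F : rel V.
Hypothesis LF : Lambda_factor (Yrel E a nb) F.

Let Fsym := Lambda_factor_sym LF.
Let Fcsym := Lambda_factor_connect_sym LF.

Definition meetsZ (p : V) := [exists j, connect F p (inr j)].

Definition attached i : {set Sub} := [set y | meetsZ (Ycopy i y)].

Lemma meetsZ_connect p q : connect F p q -> meetsZ q -> meetsZ p.
Proof. by move=> pq /existsP [j qj]; apply/existsP; exists j; apply: connect_trans qj. Qed.

Lemma Ycopy_edge i j x y : F (Ycopy i x) (Ycopy j y) -> i = j.
Proof. by move/(Lambda_factor_sub LF) => /andP [/eqP]. Qed.

Lemma connect_unattached i y q :
  y \notin attached i -> connect F (Ycopy i y) q -> exists y', q = Ycopy i y'.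
Proof.
rewrite inE => ny yq.
pose inCopy (p : V) := if p is inl (k, _) then k == i else false.
have clF : closed F [pred p | meetsZ p || inCopy p].
  suff imp p r : F p r -> meetsZ p || inCopy p -> meetsZ r || inCopy r.
    by move=> p r Fpr; apply/idP/idP; apply: imp; rewrite // Fsym.
  move=> Fpr /orP [mp|].
    by rewrite (meetsZ_connect _ mp) // Fcsym connect1.
  case: p Fpr => [[k x]|//] Fpr /eqP ki; subst k.
  case: r Fpr => [[k z] /Ycopy_edge <- | j _]; first by rewrite /= eqxx orbT.
  by apply/orP; left; apply/existsP; exists j; apply: connect0.
have := closed_connect clF yq; rewrite !inE /= eqxx orbT => /esym /orP [mq|].
  by case/negP: ny; apply: meetsZ_connect mq.
by case: q {yq} => [[k z] /eqP ->|//]; exists z.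
Qed.

Lemma dvdn_card_unattached i : 3 %| #|~: attached i|.
Proof.
pose R y z := connect F (Ycopy i y) (Ycopy i z).
have eqR : {in ~: attached i & &, equivalence_rel R}.
  move=> x y z _ _ _; split=> [|xy]; first exact: connect0.
  by rewrite /R (same_connect Fcsym xy).
rewrite (card_partition (equivalence_partitionP eqR)).
apply: dvdn_sum => B /imsetP [y]; rewrite inE => yU ->.
rewrite -(card_imset _ (@Ycopy_inj i)).
suff -> : Ycopy i @: [set z in ~: attached i | R y z] = [set q | connect F (Ycopy i y) q].
  by rewrite (card_Lambda_factor_component LF).
apply/setP => q; rewrite inE; apply/imsetP/idP => [[z]|yq].
  by rewrite !inE => /andP [_ ?] ->.
have [z qz] := connect_unattached yU yq; exists z; last exact: qz.
rewrite !inE /R -qz yq andbT; apply: contra yU; rewrite !inE; exact: meetsZ_connect.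
Qed.

Lemma card_attached_mod3 i : 3 %| #|T| -> #|attached i| %% 3 = 2.
Proof.
have := cardsC (attached i); have := dvdn_card_unattached i.
have : 0 < #|T| by apply/card_gt0P; exists a.
by rewrite card_Sub; lia.
Qed.

Definition z_partners j : {set V} := [set q | connect F (inr j) q] :\ inr j.

Lemma card_z_partners j : #|z_partners j| = 2.
Proof.
have := cardsD1 (inr j : V) [set q | connect F (inr j) q].
by rewrite (card_Lambda_factor_component LF) inE connect0 => -[].
Qed.

Lemma sum_card_attached : \sum_(i < 3) #|attached i| <= 6.
Proof.
have disj i k : i != k -> [disjoint Ycopy i @: attached i & Ycopy k @: attached k].
  move=> ik; rewrite -setI_eq0; apply/set0Pn => -[_ /setIP [/imsetP [x _ ->]]].
  by case/imsetP => z _ [ik']; rewrite ik' eqxx in ik.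
have cover_copies : \bigcup_i (Ycopy i @: attached i) \subset \bigcup_(j < 3) z_partners j.
  apply/subsetP => q /bigcupP [i _ /imsetP [y]]; rewrite inE => /existsP [j yj] ->.
  by apply/bigcupP; exists j => //; rewrite !inE Fcsym yj andbT.
have subadd : #|\bigcup_(j < 3) z_partners j| <= \sum_(j < 3) #|z_partners j|.
  elim/big_ind2: _ => [|m A n B Am Bn|j _]; rewrite ?cards0 //.
  by apply: leq_trans (leq_card_setU A B).1 (leq_add Am Bn).
under eq_bigr => i _ do rewrite -(card_imset _ (@Ycopy_inj i)) -sum1_card.
rewrite -partition_disjoint_bigcup // sum1_card.
apply: leq_trans (subset_leq_card cover_copies) (leq_trans subadd _).
by under eq_bigr => j _ do rewrite card_z_partners; rewrite sum_nat_const card_ord.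
Qed.

Lemma card_attached i : 3 %| #|T| -> #|attached i| = 2.
Proof.
move=> n3; have := sum_card_attached; rewrite (bigD1 i) //=.
set rest := (X in _ + X <= 6) => le6.
have two_le k : 2 <= #|attached k| by have := card_attached_mod3 k n3; lia.
have rest4 : 2 * 2 <= rest.
  apply: leq_trans (leq_sum _ (fun k _ => two_le k)).
  by rewrite sum_nat_const cardC1 card_ord.
by clearbody rest; move: le6 rest4 (two_le i); set x := #|attached i|; lia.
Qed.

Section Restriction.
Variable i : 'I_3.
Hypothesis Esym : symmetric E.
Hypothesis Ea_nb : forall j, E a (nb j).

(* The vertex a of A stands for z_1, z_2, z_3 collapsed together. *)
Definition Fcopy (x y : T) : bool :=
  match (insub x : option Sub), (insub y : option Sub) with
  | Some x', Some y' => F (Ycopy i x') (Ycopy i y')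
  | Some x', None => [exists j, F (Ycopy i x') (inr j)]
  | None, Some y' => [exists j, F (inr j) (Ycopy i y')]
  | None, None => false
  end.

Lemma insub_a : (insub a : option Sub) = None.
Proof. by rewrite insubF // eqxx. Qed.

Lemma Fcopy_val2 (x y : Sub) : Fcopy (val x) (val y) = F (Ycopy i x) (Ycopy i y).
Proof. by rewrite /Fcopy !valK. Qed.

Lemma Fcopy_val_a (x : Sub) : Fcopy (val x) a = [exists j, F (Ycopy i x) (inr j)].
Proof. by rewrite /Fcopy valK insub_a. Qed.

Lemma Fcopy_a_val (x : Sub) : Fcopy a (val x) = [exists j, F (inr j) (Ycopy i x)].
Proof. by rewrite /Fcopy valK insub_a. Qed.

Lemma Fcopy_aa : Fcopy a a = false.
Proof. by rewrite /Fcopy insub_a. Qed.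

Lemma a_or_val (x : T) : x = a \/ exists y : Sub, x = val y.
Proof. by have [->|xa] := eqVneq x a; [left | right; exists (exist _ x xa)]. Qed.

Lemma Fcopy_sym : symmetric Fcopy.
Proof.
move=> x y; case: (a_or_val x) => [->|[x' ->]]; case: (a_or_val y) => [->|[y' ->]];
  rewrite ?Fcopy_aa ?Fcopy_a_val ?Fcopy_val_a ?Fcopy_val2 // ?Fsym //.
all: by apply/existsP/existsP => -[j h]; exists j; rewrite Fsym.
Qed.

Lemma Fcopy_irr : irreflexive Fcopy.
Proof.
move=> x; case: (a_or_val x) => [->|[y ->]]; first exact: Fcopy_aa.
by rewrite Fcopy_val2 (Lambda_factor_irr LF).
Qed.

Lemma E_a_Fcopy (y : Sub) : Fcopy a (val y) -> E a (val y).
Proof.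
by rewrite Fcopy_a_val => /existsP [j /(Lambda_factor_sub LF) /eqP ->]; exact: Ea_nb.
Qed.

Lemma Fcopy_sub : subrel Fcopy E.
Proof.
move=> x y; case: (a_or_val x) => [->|[x' ->]]; case: (a_or_val y) => [->|[y' ->]].
- by rewrite Fcopy_aa.
- exact: E_a_Fcopy.
- by rewrite Fcopy_sym Esym; exact: E_a_Fcopy.
- by rewrite Fcopy_val2 => /(Lambda_factor_sub LF) /andP [].
Qed.

Lemma Fcopy_a_attached (y : Sub) : Fcopy a (val y) -> y \in attached i.
Proof.
rewrite Fcopy_a_val inE => /existsP [j Fjy].
by apply/existsP; exists j; rewrite Fcsym connect1.
Qed.

Lemma Fcopy_attached (x y : Sub) :
  Fcopy (val x) (val y) -> (x \in attached i) = (y \in attached i).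
Proof.
rewrite Fcopy_val2 !inE => Fxy.
apply/idP/idP; apply: meetsZ_connect; apply: connect1; by rewrite // Fsym.
Qed.

Lemma Fcopy_no_triangle_a (s t : Sub) :
  Fcopy a (val s) -> Fcopy (val s) (val t) -> ~~ Fcopy a (val t).
Proof.
rewrite !Fcopy_a_val Fcopy_val2 => /existsP [j Fjs] Fst; apply/existsP => -[k Fkt].
by rewrite Fsym in Fkt; case: (Lambda_factor_walk3 LF Fjs Fst Fkt).
Qed.

Lemma attached_neighbour (s : Sub) : s \in attached i ->
  Fcopy a (val s) \/ exists2 t, t \in attached i & Fcopy (val s) (val t) && Fcopy a (val t).
Proof.
rewrite inE => /existsP [j sj].
have aS p : F (inr p) (Ycopy i s) -> Fcopy a (val s).
  by move=> Fps; rewrite Fcopy_a_val; apply/existsP; exists p.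
case: (Lambda_factor_connect2 LF sj isT) => [Fsj|[[[k t]|p] Fst Ftj]].
- by left; apply: (aS j); rewrite Fsym.
- have ki := esym (Ycopy_edge Fst); subst k; right; exists t.
    by rewrite inE; apply/existsP; exists j; apply: connect1.
  by rewrite Fcopy_val2 Fst Fcopy_a_val; apply/existsP; exists j; rewrite Fsym.
- by left; apply: (aS p); rewrite Fsym.
Qed.

Lemma Fcopy_a_nb j (y : Sub) : F (inr j) (Ycopy i y) -> Fcopy a (nb j).
Proof.
move=> Fjy; have /eqP <- := Lambda_factor_sub LF Fjy.
by rewrite Fcopy_a_val; apply/existsP; exists j.
Qed.

Lemma unattached_path3 (y : Sub) : y \notin attached i ->
  exists u v w, [/\ uniq [:: u; v; w], val y \in [:: u; v; w],
    Fcopy u v, Fcopy v w & ~~ Fcopy u w] /\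
  {in [:: u; v; w], forall p q, Fcopy p q -> q \in [:: u; v; w]}.
Proof.
move=> yU; have [u [v [w [U C Fuv Fvw nFuw]]]] := Lambda_factor_path3 LF (Ycopy i y).
have inCopy p : p \in [:: u; v; w] -> exists p', p = Ycopy i p'.
  by move/C; apply: connect_unattached.
have [u' eu] := inCopy u (mem_head _ _).
have [v' ev] : exists v', v = Ycopy i v' by apply: inCopy; rewrite !inE eqxx orbT.
have [w' ew] : exists w', w = Ycopy i w' by apply: inCopy; rewrite !inE eqxx !orbT.
subst u v w.
set l := [:: u'; v'; w'].
have memE z : (val z \in map val l) = (Ycopy i z \in map (Ycopy i) l).
  by rewrite (mem_map val_inj) (mem_map (@Ycopy_inj i)).
have unattachedC z : Ycopy i z \in map (Ycopy i) l -> z \notin attached i.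
  move/C => yz; apply: contra yU; rewrite !inE; exact: meetsZ_connect.
exists (val u'), (val v'), (val w'); rewrite !Fcopy_val2; split.
  split=> //; last by rewrite (memE y); apply/C; exact: connect0.
  by rewrite (map_inj_uniq val_inj l) -(map_inj_uniq (@Ycopy_inj i) l).
change {in map val l, forall p q, Fcopy p q -> q \in map val l}.
move=> p /mapP [p' p'l ->] q Fpq.
have p'U : p' \notin attached i by apply: unattachedC; rewrite map_f.
case: (a_or_val q) Fpq => [->|[q' ->]].
  by rewrite Fcopy_sym => /Fcopy_a_attached p'A; rewrite p'A in p'U.
rewrite Fcopy_val2 memE => Fpq; apply/C; apply: connect_trans (connect1 Fpq).
by apply/C; exact: (map_f (Ycopy i) p'l).
Qed.

Section AttachedPair.
Variables s t : Sub.
Hypothesis st : attached i = [set s; t].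

Lemma attached_pair_neighbour :
  (Fcopy a (val s) || Fcopy a (val t)) && (Fcopy (val s) a || Fcopy (val s) (val t)).
Proof.
have sA : s \in attached i by rewrite st !inE eqxx.
rewrite (Fcopy_sym _ a); case: (attached_neighbour sA) => [-> // | [r]].
rewrite st !inE => /orP [] /eqP -> /andP [Fsr Far]; last by rewrite Far Fsr !orbT.
by rewrite Fcopy_irr in Fsr.
Qed.

Lemma attached_pair_closed :
  {in [:: a; val s; val t], forall p q, Fcopy p q -> q \in [:: a; val s; val t]}.
Proof.
have memE (z : Sub) : (val z \in [:: a; val s; val t]) = (z \in attached i).
  by rewrite st !inE (negbTE (valP z)).
move=> p pC q; case: (a_or_val q) => [-> _|[z ->]]; first exact: mem_head.
rewrite memE; case: (a_or_val p) pC => [->|[y ->]]; first by move=> _ /Fcopy_a_attached.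
by rewrite memE => yA /Fcopy_attached <-.
Qed.

End AttachedPair.

Lemma attached_path3 (s t : Sub) : attached i = [set s; t] ->
  exists u v w, [/\ perm_eq [:: u; v; w] [:: a; val s; val t],
    Fcopy u v, Fcopy v w & ~~ Fcopy u w].
Proof.
move=> st; have ts : attached i = [set t; s] by rewrite setUC.
have /andP [at1 s1] := attached_pair_neighbour st.
have /andP [_ t1] := attached_pair_neighbour ts.
apply: triangle_free_path3 Fcopy_sym _ at1 s1 t1.
by apply/negP => /and3P [Fas Fst]; apply/negP; exact: Fcopy_no_triangle_a Fas Fst.
Qed.

Lemma Fcopy_Lambda_factor : 3 %| #|T| -> Lambda_factor E Fcopy.
Proof.
move=> n3; have /cards2P [s [t [st attE]]] : #|attached i| == 2 by rewrite card_attached.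
have core x : x \in [:: a; val s; val t] -> exists u v w,
    [/\ uniq [:: u; v; w], x \in [:: u; v; w], Fcopy u v, Fcopy v w & ~~ Fcopy u w] /\
    {in [:: u; v; w], forall p q, Fcopy p q -> q \in [:: u; v; w]}.
  have [u [v [w [perm Fuv Fvw nFuw]]]] := attached_path3 attE.
  move=> xC; exists u, v, w; rewrite (perm_uniq perm) (perm_mem perm); split.
    by split=> //; rewrite !cons_uniq !inE negb_or !(eq_sym a) (valP s) (valP t) val_eqE st.
  move=> p; rewrite !(perm_mem perm) => pC q Fpq; rewrite (perm_mem perm).
  exact: attached_pair_closed attE _ pC _ Fpq.
apply: Lambda_factor_of_paths Fcopy_sub Fcopy_sym Fcopy_irr _ => x.
case: (a_or_val x) => [->|[y ->]]; first by apply: core; rewrite mem_head.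
case: (boolP (y \in attached i)) => yA; last exact: unattached_path3.
by apply: core; move: yA; rewrite attE !inE => /orP [] /eqP ->; rewrite eqxx !orbT.
Qed.

End Restriction.
End YFactor.
End YConstruction.

Theorem mainTheorem8 (T : finType) (E : rel T) (a : T) (nb : 'I_3 -> T) :
  simple_graph E -> cubic E ->
  #|T| %% 6 = 0 ->
  injective nb ->
  nbhd E a = [set nb j | j : 'I_3] ->
  ~ has_Lambda_factor_containing E a (nb ord0) ->
  #|YV T a| %% 6 = 0 /\ ~ has_Lambda_factor (Yrel E a nb).
Proof.
move=> [Esym _] _ n6 _ nbE noLF; have n3 : 3 %| #|T| by lia.
split; first by rewrite card_YV; lia.
case=> F LF; have [[[i y]|j] Fzy] := Lambda_factor_neighbour LF (inr ord0); last first.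
  by have := Lambda_factor_sub LF Fzy.
have Ea_nb j : E a (nb j).
  have : nb j \in nbhd E a by rewrite nbE; apply/imsetP; exists j.
  by rewrite inE.
apply: noLF; exists (Fcopy F i); split; first exact: Fcopy_Lambda_factor LF i Esym Ea_nb n3.
exact: (Fcopy_a_nb LF Fzy).
Qed.
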